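(* Let $G$ be a finitely presented group. Then for all $k\geq0$, \[ \mathcal{W}_k(B_{\mathfrak{H}(G)})\setminus\{0\}=\mathcal{R}_k(G)\setminus\{0\}, \] as subsets of $H^1(G,\mathbb{C})$.
   Context: Let $X=G_{\mathrm{ab}}\otimes\mathbb{C}=H_1(G,\mathbb{C})$; $\mathbb{C}[X]=\operatorname{Sym}(X)$ is the coordinate ring of $H^1(G,\mathbb{C})=X^*$. The infinitesimal Alexander invariant $B_{\mathfrak{H}(G)}$ is the $\mathbb{C}[X]$-module presented by $\nabla=\delta_3+\mathrm{id}\otimes\partial_G\colon\mathbb{C}[X]\otimes(\bigwedge^3X\oplus H_2(G,\mathbb{C}))\to\mathbb{C}[X]\otimes\bigwedge^2X$, where $\delta_3(x\wedge y\wedge z)=x\otimes y\wedge z-y\otimes x\wedge z+z\otimes x\wedge y$ and $\partial_G$ is dual to the cup product $\bigwedge^2H^1(G,\mathbb{C})\to H^2(G,\mathbb{C})$. For a finitely generated module $N$ presented by $R^r\xrightarrow{\nabla}R^s\to N\to 0$, $\mathcal{F}_k(N)$ is generated by the $(s-k)$-minors of $\nabla$ if $0<s-k\le\min\{r,s\}$, equals $R$ if $s-k\le0$, and is $0$ otherwise; $\mathcal{W}_k(N)=Z(\mathcal{F}_{k-1}(N))$. $\mathcal{R}_k(G)$ is the set of $z\in H^1(G,\mathbb{C})$ such that the degree-one cohomology of $0\to\mathbb{C}\to H^1(G,\mathbb{C})\to H^2(G,\mathbb{C})\to0$ (differentials $c\mapsto cz$, $x\mapsto x\cup z$) has dimension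 $\geq k$. *)

From mathcomp Require Import all_boot all_algebra.
From mathcomp Require Import Rstruct.
From mathcomp Require Export complex.
From mathcomp.multinomials Require Export mpoly.
Set Implicit Arguments. Unset Strict Implicit. Unset Printing Implicit Defensive.
Import GRing.Theory.
Local Open Scope ring_scope.

Definition CC : fieldType := (Rdefinitions.R)[i].

(* Basis indices of /\^2 X and /\^3 X for X = C^n with basis e_0..e_{n-1}:
   e_i /\ e_j with i < j, and e_a /\ e_b /\ e_c with a < b < c. *)
Definition P2 (n : nat) := {p : 'I_n * 'I_n | (p.1 < p.2)%N}.
Definition P3 (n : nat) := {p : 'I_n * 'I_n * 'I_n | (p.1.1 < p.1.2)%N && (p.1.2 < p.2)%N}.

(* Cup-product data of G:  n = dim H_1(G,C), m = dim H_2(G,C), and for the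
   basis h_0..h_{m-1} of H_2(G,C), cup t p = <e_i^* u e_j^*, h_t> where
   p = (i,j), i<j, i.e. the coefficient of e_i /\ e_j in partial_G(h_t).
   This is exactly the linear map partial_G : H_2 -> /\^2 X, dual to the cup
   product /\^2 H^1 -> H^2. *)
Definition cupdata (n m : nat) := 'I_m -> P2 n -> CC.

Notation CX n := {mpoly CC[n]}.

(* The presentation matrix nabla = delta_3 + id (x) partial_G of the infinitesimal
   Alexander invariant, rows indexed by the basis of /\^2 X, columns by the
   basis of /\^3 X (+) H_2(G,C). *)
Definition nabla (n m : nat) (c : cupdata n m) (q : P2 n) (col : P3 n + 'I_m) : CX n :=
  match col with
  | inl t =>
      let a := (val t).1.1 in let b := (val t).1.2 in let d := (val t).2 in
      (* delta_3(e_a/\e_b/\e_d) = e_a (x) e_b/\e_d - e_b (x) e_a/\e_d + e_d (x) e_a/\e_b *)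
      (if val q == (b, d) then 'X_a else 0)
      - (if val q == (a, d) then 'X_b else 0)
      + (if val q == (a, b) then 'X_d else 0)
  | inr t => (c t q)%:MP
  end.

Definition is_minor (R : comRingType) (I J : finType) (A : I -> J -> R) (d : nat) (p : R) : Prop :=
  exists (f : 'I_d -> I) (g : 'I_d -> J),
    injective f /\ injective g /\ p = \det (\matrix_(a < d, b < d) A (f a) (g b)).

Definition in_ideal_gen (R : comRingType) (S : R -> Prop) (p : R) : Prop :=
  exists l : seq (R * R), (forall u, u \in l -> S u.2) /\ p = \sum_(u <- l) u.1 * u.2.

(* Fitting ideal F_k(N) of the module presented by A : R^r -> R^s, with
   s = #|I|, r = #|J|, for k an integer. *)
Definition fitting (R : comRingType) (I J : finType) (A : I -> J -> R) (k : int) (p : R) : Prop :=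
  let s := #|I| in let r := #|J| in
  let d := (s%:Z - k)%R in
  if (d <= 0)%R then True
  else if (`|d|%N <= minn r s)%N then in_ideal_gen (is_minor A `|d|%N) p
  else p = 0.

(* Zero locus in H^1(G,C) = X^* = C^n of an ideal of C[X]. *)
Definition zero_locus (n : nat) (I : CX n -> Prop) (z : 'rV[CC]_n) : Prop :=
  forall p, I p -> p.@[fun i => z 0 i] = 0.

(* W_k(N) = Z(F_{k-1}(N)), for N = B_{H(G)}. *)
Definition Wk (n m : nat) (c : cupdata n m) (k : nat) : 'rV[CC]_n -> Prop :=
  zero_locus (fitting (nabla c) (k%:Z - 1)).

(* Cup product x u z in H^2(G,C) = C^m (coordinates w.r.t. the dual basis of h_t). *)
Definition cup (n m : nat) (c : cupdata n m) (x z : 'rV[CC]_n) : 'rV[CC]_m :=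
  \row_(t < m) \sum_(p : P2 n)
     (x 0 (val p).1 * z 0 (val p).2 - x 0 (val p).2 * z 0 (val p).1) * c t p.

(* Matrices of the differentials of 0 -> C -> H^1 -> H^2 -> 0 (row-vector
   convention): d0(c) = c z, d1(x) = x u z. *)
Definition d0mx (n : nat) (z : 'rV[CC]_n) : 'M[CC]_(1, n) := z.
Definition d1mx (n m : nat) (c : cupdata n m) (z : 'rV[CC]_n) : 'M[CC]_(n, m) :=
  \matrix_(i < n) cup c (delta_mx 0 i) z.

Definition H1dim (n m : nat) (c : cupdata n m) (z : 'rV[CC]_n) : nat :=
  (\rank (kermx (d1mx c z)) - \rank (d0mx z))%N.

Definition Rk (n m : nat) (c : cupdata n m) (k : nat) (z : 'rV[CC]_n) : Prop :=
  (k <= H1dim c z)%N.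

(* At z <> 0, a row vector w in /\^2 X satisfies w nabla(z) = 0 iff z /\ w = 0
   (the /\^3 X columns) and w is orthogonal to partial_G(H_2) (the H_2
   columns).  The Koszul complex of z is exact, so the first condition means
   w = x /\ z, and <x /\ z, partial_G h> = <x u z, h>.  Hence x |-> x /\ z maps
   ker d1 onto ker nabla(z), with kernel the line spanned by z, and
   dim ker nabla(z) = dim ker d1 - 1 = dim H^1.  On the other hand z lies in the
   zero locus of F_(k-1) iff all (s-k+1)-minors of nabla(z) vanish, i.e. iff
   rank nabla(z) <= s - k, i.e. iff dim ker nabla(z) >= k. *)

From mathcomp Require Import all_boot all_algebra.
From mathcomp Require Import ring zify.
Import GRing.Theory.
Local Open Scope ring_scope.

Section Minors.
Variable F : fieldType.

Lemma row_free_rowsub p q d (h : 'I_d -> 'I_p) (B : 'M[F]_(p, q)) :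
  injective h -> row_free B -> row_free (rowsub h B).
Proof.
move=> h_inj B_free; apply: inj_row_free => v.
rewrite rowsubE mulmxA => /eqP; rewrite mulmx_free_eq0 // => /eqP vh0.
apply/rowP => i; have /rowP/(_ (h i)) := vh0; rewrite !mxE (bigD1 i) //= big1.
  by rewrite !mxE !eqxx mulr1 addr0.
by move=> j ji; rewrite !mxE (inj_eq h_inj) (negPf ji) mulr0.
Qed.

Lemma mxrank_mxsub p q d1 d2 (f : 'I_d1 -> 'I_p) (g : 'I_d2 -> 'I_q)
    (A : 'M[F]_(p, q)) :
  (\rank (mxsub f g A) <= \rank A)%N.
Proof.
rewrite mxsubrc (leq_trans (mxrankS (rowsub_sub _ _))) //.
by rewrite -mxrank_tr -[leqRHS]mxrank_tr trmx_mxsub mxrankS ?rowsub_sub.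
Qed.

Lemma mxrank_minorP p q d (A : 'M[F]_(p, q)) :
  (d <= \rank A)%N <-> exists (f : 'I_d -> 'I_p) (g : 'I_d -> 'I_q),
    [/\ injective f, injective g & \det (mxsub f g A) != 0].
Proof.
split; last first.
  move=> [f [g [_ _ det_neq0]]].
  have : row_free (mxsub f g A) by rewrite row_free_unit unitmxE unitfE.
  by move/eqP=> <-; apply: mxrank_mxsub.
move=> le_dA; pose h := widen_ord le_dA.
have h_inj : injective h by move=> i j /(congr1 val) /= /val_inj.
pose B := rowsub (maxrankfun A \o h) A.
have B_free : row_free B.
  by rewrite /B rowsub_comp row_free_rowsub ?maxrowsub_free.
have BT_full : row_full B^T by rewrite /row_full mxrank_tr.
exists (maxrankfun A \o h), (fullrankfun BT_full); split.
- by move=> i j /maxrankfun_inj/h_inj.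
- exact: fullrankfun_inj.
- have := fullrowsub_unit BT_full; rewrite unitmxE unitfE -det_tr.
  by rewrite trmx_mxsub trmxK -mxsubcr.
Qed.

End Minors.

Lemma alternating3_eq0 (V : zmodType) n (f : 'I_n -> 'I_n -> 'I_n -> V) :
    (forall i j k, f j i k = - f i j k) -> (forall i j k, f i k j = - f i j k) ->
    (forall i k, f i i k = 0) ->
    (forall i j k : 'I_n, (i < j < k)%N -> f i j k = 0) ->
  forall i j k, f i j k = 0.
Proof.
move=> f12 f23 f11 f_sorted.
have f22 i j : f i j j = 0 by rewrite f12 f23 f11 !oppr0.
have f13 i j : f i j i = 0 by rewrite f23 f11 oppr0.
move=> i j k.
case: (ltngtP i j) => [ij|ji|/val_inj->]; last exact: f11.
all: case: (ltngtP j k) => [jk|kj|/val_inj->]; last exact: f22.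
all: case: (ltngtP i k) => [ik|ki|/val_inj->]; last exact: f13.
all: first
  [ exfalso; lia
  | rewrite f_sorted //; lia
  | rewrite f23 f_sorted ?oppr0 //; lia
  | rewrite f12 f_sorted ?oppr0 //; lia
  | rewrite f12 f23 f_sorted ?opprK //; lia
  | rewrite f23 f12 f_sorted ?opprK //; lia
  | rewrite f12 f23 f12 f_sorted ?opprK ?oppr0 //; lia ].
Qed.

Lemma sum_mul_delta (R : pzRingType) n (x : 'rV[R]_n) (k : 'I_n) :
  \sum_i x 0 i * (k == i)%:R = x 0 k.
Proof.
under eq_bigr do rewrite mulr_natr mulrb eq_sym.
by rewrite -big_mkcond big_pred1_eq.
Qed.

Definition eval_mx {n} {I J : finType} (A : I -> J -> CX n) (z : 'rV[CC]_n) :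
    'M[CC]_(#|I|, #|J|) :=
  \matrix_(i, j) (A (enum_val i) (enum_val j)).@[fun a => z 0 a].

Section EvalMx.
Context {n : nat} {I J : finType} (A : I -> J -> CX n) (z : 'rV[CC]_n).

Lemma mul_eval_mx (w : 'rV[CC]_#|I|) j :
  (w *m eval_mx A z) 0 j =
  \sum_(i : I) w 0 (enum_rank i) * (A i (enum_val j)).@[fun a => z 0 a].
Proof.
rewrite mxE [RHS]big_enum_val /=.
by apply: eq_bigr => i _; rewrite enum_valK mxE.
Qed.

Lemma meval_minor d (f : 'I_d -> I) (g : 'I_d -> J) :
  (\det (\matrix_(a, b) A (f a) (g b))).@[fun a => z 0 a] =
  \det (mxsub (enum_rank \o f) (enum_rank \o g) (eval_mx A z)).
Proof.
rewrite -det_map_mx; congr (\det _).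
by apply/matrixP => a b; rewrite !mxE !enum_rankK.
Qed.

Lemma zero_locus_ideal_gen (S : CX n -> Prop) :
  zero_locus (in_ideal_gen S) z <-> forall p, S p -> p.@[fun a => z 0 a] = 0.
Proof.
split=> [S0 p Sp | S0 _ [l [lS ->]]].
  apply: S0; exists [:: (1, p)]; rewrite big_seq1 mul1r.
  by split=> // u; rewrite inE => /eqP->.
rewrite rmorph_sum big1_seq // => u /andP[_ /lS Su].
by rewrite rmorphM /= (S0 _ Su) mulr0.
Qed.

Lemma zero_locus_minors d :
  zero_locus (in_ideal_gen (is_minor A d)) z <-> (\rank (eval_mx A z) < d)%N.
Proof.
rewrite zero_locus_ideal_gen ltnNge.
split=> [minor0 | lt_Ad _ [f [g [f_inj [g_inj ->]]]]].
  apply/negP => /mxrank_minorP[f [g [f_inj g_inj]]].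
  have -> : mxsub f g (eval_mx A z) =
      mxsub (enum_rank \o (enum_val \o f)) (enum_rank \o (enum_val \o g))
        (eval_mx A z).
    by apply/matrixP => a b; rewrite !mxE /= !enum_valK.
  rewrite -meval_minor minor0 ?eqxx //.
  exists (enum_val \o f), (enum_val \o g).
  by split; [|split] => // a b /enum_val_inj; [move/f_inj | move/g_inj].
rewrite meval_minor; apply/eqP/negP => /negP det_neq0; case/negP: lt_Ad.
apply/mxrank_minorP; exists (enum_rank \o f), (enum_rank \o g).
by split=> // a b /enum_rank_inj; [move/f_inj | move/g_inj].
Qed.

Lemma zero_locus_fitting (k : int) :
  zero_locus (fitting A k) z <-> ((\rank (eval_mx A z))%:Z + k < #|I|%:Z)%R.
Proof.
have le_rank_row := rank_leq_row (eval_mx A z).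
have le_rank_col := rank_leq_col (eval_mx A z).
unfold fitting; cbv zeta; set d := (#|I|%:Z - k)%R.
have [le_d0 | lt0d] := boolP (d <= 0)%R.
  split=> [/(_ 1 Logic.I) | ]; last by lia.
  by rewrite meval1 => /eqP; rewrite oner_eq0.
have [le_d_min | lt_min_d] := boolP (`|d| <= minn #|J| #|I|)%N.
  by rewrite zero_locus_minors; lia.
by split=> [_ | _ p ->]; [lia | exact: meval0].
Qed.

End EvalMx.

Section KoszulComplex.
Context {n m : nat} (c : cupdata n m) (z : 'rV[CC]_n).

Local Notation s := #|{: P2 n}|.
Local Notation N := (eval_mx (nabla c) z).

(* Coordinates of w in the basis e_i /\ e_j (i < j) of /\^2 X, extended by 0
   (pair_coord) and antisymmetrically (wedge_coord) to all pairs. *)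
Definition pair_coord (w : 'rV[CC]_s) (i j : 'I_n) : CC :=
  if insub (i, j) is Some p then w 0 (enum_rank (p : P2 n)) else 0.

Definition wedge_coord (w : 'rV[CC]_s) (i j : 'I_n) : CC :=
  pair_coord w i j - pair_coord w j i.

Lemma pair_coordE w (p : P2 n) :
  pair_coord w (val p).1 (val p).2 = w 0 (enum_rank p).
Proof. by rewrite /pair_coord -surjective_pairing valK. Qed.

Lemma pair_coord_ge w (i j : 'I_n) : (j <= i)%N -> pair_coord w i j = 0.
Proof. by move=> le_ji; rewrite /pair_coord insubF //= ltnNge le_ji. Qed.

Lemma wedge_coordN w i j : wedge_coord w j i = - wedge_coord w i j.
Proof. by rewrite /wedge_coord opprB. Qed.

Lemma wedge_coord_diag w i : wedge_coord w i i = 0.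
Proof. exact: subrr. Qed.

Lemma wedge_coord_lt w (i j : 'I_n) :
  (i < j)%N -> wedge_coord w i j = pair_coord w i j.
Proof.
by move=> lt_ij; rewrite /wedge_coord (pair_coord_ge w j i (ltnW lt_ij)) subr0.
Qed.

Lemma wedge_coordE w (p : P2 n) :
  wedge_coord w (val p).1 (val p).2 = w 0 (enum_rank p).
Proof. by rewrite wedge_coord_lt ?pair_coordE //; exact: (valP p). Qed.

Lemma wedge_coord0 i j : wedge_coord 0 i j = 0.
Proof.
by rewrite /wedge_coord /pair_coord; do 2?case: insub => [?|]; rewrite ?mxE subrr.
Qed.

Definition wedge_mx : 'M[CC]_(n, s) :=
  \matrix_(i, q) let p := val (enum_val q) in
    (p.1 == i)%:R * z 0 p.2 - (p.2 == i)%:R * z 0 p.1.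

Lemma wedge_coord_wedge x i j :
  wedge_coord (x *m wedge_mx) i j = x 0 i * z 0 j - x 0 j * z 0 i.
Proof.
have pair_wedge (a b : 'I_n) : pair_coord (x *m wedge_mx) a b =
    if (a < b)%N then x 0 a * z 0 b - x 0 b * z 0 a else 0.
  rewrite /pair_coord; case: insubP => [p lt_ab val_p | /negPf-> //].
  rewrite lt_ab mxE; under eq_bigr do rewrite mxE enum_rankK val_p mulrBr !mulrA.
  by rewrite sumrB -!mulr_suml !sum_mul_delta.
rewrite /wedge_coord !pair_wedge.
by case: ltngtP => [_|_|/val_inj->]; ring.
Qed.

(* The coefficient of e_i /\ e_j /\ e_k in z /\ W, for W alternating. *)
Definition zwedge_coord (W : 'I_n -> 'I_n -> CC) (i j k : 'I_n) : CC :=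
  z 0 i * W j k - z 0 j * W i k + z 0 k * W i j.

Lemma sum_pair_coord (w : 'rV[CC]_s) (u v : 'I_n) (y : CC) :
  \sum_(p : P2 n) w 0 (enum_rank p) * (if val p == (u, v) then y else 0) =
  pair_coord w u v * y.
Proof.
rewrite /pair_coord; case: insubP => [p0 _ val_p0 | not_uv].
  rewrite (bigD1 p0) // big1 /= => [|p ne_p]; first by rewrite -val_p0 eqxx addr0.
  by rewrite -val_p0 (inj_eq val_inj) (negPf ne_p) mulr0.
rewrite mul0r big1 // => p _; rewrite ifN ?mulr0 //.
by apply: contra not_uv => /eqP <-; exact: (valP p).
Qed.

Lemma mul_nabla_inl (w : 'rV[CC]_s) (t : P3 n) :
  (w *m N) 0 (enum_rank (inl t)) =
  zwedge_coord (wedge_coord w) (val t).1.1 (val t).1.2 (val t).2.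
Proof.
have /andP[lt_ab lt_bd] := valP t.
rewrite mul_eval_mx enum_rankK.
under eq_bigr do rewrite /nabla /= rmorphD rmorphB /= !(fun_if (meval _))
  !mevalXU !meval0 mulrDr mulrBr.
rewrite big_split sumrB /= !sum_pair_coord /zwedge_coord !wedge_coord_lt //.
  by rewrite ![z 0 _ * _]mulrC.
exact: ltn_trans lt_bd.
Qed.

Lemma mul_nabla_inr (w : 'rV[CC]_s) (t : 'I_m) :
  (w *m N) 0 (enum_rank (inr t)) = \sum_(p : P2 n) w 0 (enum_rank p) * c t p.
Proof.
by rewrite mul_eval_mx enum_rankK; under eq_bigr do rewrite /nabla /= mevalC.
Qed.

Lemma mul_d1mx x t : (x *m d1mx c z) 0 t = cup c x z 0 t.
Proof.
rewrite mxE; under eq_bigr do rewrite !mxE mulr_sumr.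
rewrite exchange_big mxE; apply: eq_bigr => p _.
under eq_bigr do rewrite !mxE !eqxx /= mulrBl mulrBr !mulrA.
by rewrite sumrB -!mulr_suml !sum_mul_delta mulrBl.
Qed.

Lemma mul_wedge_nabla_eq0 (x : 'rV[CC]_n) :
  (x *m wedge_mx *m N == 0) = (x *m d1mx c z == 0).
Proof.
apply/eqP/eqP => [xwN0 | xd0].
  apply/rowP => t; rewrite mul_d1mx !mxE.
  have /rowP/(_ (enum_rank (inr t))) := xwN0.
  rewrite mul_nabla_inr mxE => xwN0_t; rewrite -[RHS]xwN0_t; apply: eq_bigr => p _.
  by rewrite -wedge_coordE wedge_coord_wedge.
apply/rowP => j; rewrite [RHS]mxE -(enum_valK j); case: (enum_val j) => t.
  by rewrite mul_nabla_inl /zwedge_coord !wedge_coord_wedge; ring.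
have /rowP/(_ t) := xd0; rewrite mul_nabla_inr mul_d1mx !mxE => xd0_t.
rewrite -[RHS]xd0_t.
by apply: eq_bigr => p _; rewrite -wedge_coordE wedge_coord_wedge.
Qed.

Lemma nabla_zwedge_eq0 (w : 'rV[CC]_s) : w *m N = 0 ->
  forall i j k, zwedge_coord (wedge_coord w) i j k = 0.
Proof.
move=> wN0; apply: alternating3_eq0 => [i j k | i j k | i k | i j k ijk].
- by rewrite /zwedge_coord (wedge_coordN w i j); ring.
- by rewrite /zwedge_coord (wedge_coordN w j k); ring.
- by rewrite /zwedge_coord wedge_coord_diag; ring.
have /rowP/(_ (enum_rank (inl (Sub (i, j, k) ijk : P3 n)))) := wN0.
by rewrite mul_nabla_inl mxE.
Qed.

Hypothesis z_neq0 : z != 0.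

Lemma nabla_eq0_wedge (w : 'rV[CC]_s) : w *m N = 0 -> exists x, w = x *m wedge_mx.
Proof.
move=> wN0; have /rV0Pn[j0 zj0] := z_neq0.
(* The (a, b, j0) coordinate of z /\ w = 0 solves for w at (a, b). *)
exists (\row_i (wedge_coord w i j0 / z 0 j0)); apply/rowP => q.
rewrite -[q]enum_valK -!wedge_coordE wedge_coord_wedge !mxE.
set a := (val _).1; set b := (val _).2.
transitivity
  ((wedge_coord w a b * z 0 j0 - zwedge_coord (wedge_coord w) a b j0) / z 0 j0).
  by rewrite nabla_zwedge_eq0 // subr0 mulfK.
by rewrite /zwedge_coord; field.
Qed.

Lemma wedge_mx_eq0 (x : 'rV[CC]_n) : x *m wedge_mx = 0 -> (x <= z)%MS.
Proof.
move=> xw0; have /rV0Pn[j0 zj0] := z_neq0.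
suff -> : x = (x 0 j0 / z 0 j0) *: z by rewrite scalemx_sub.
apply/rowP => i; rewrite mxE; apply: (mulIf zj0); rewrite mulrAC divfK //.
by apply/eqP; rewrite -subr_eq0 -wedge_coord_wedge xw0 wedge_coord0.
Qed.

Lemma kermx_nabla : (kermx N == kermx (d1mx c z) *m wedge_mx)%MS.
Proof.
apply/andP; split; apply/row_subP => i.
  have /sub_kermxP/nabla_eq0_wedge[x row_x] := row_sub i (kermx N).
  rewrite row_x submxMr // sub_kermx -mul_wedge_nabla_eq0 -row_x -sub_kermx.
  exact: row_sub.
rewrite row_mul sub_kermx mul_wedge_nabla_eq0 -sub_kermx; exact: row_sub.
Qed.

Lemma cap_kermx_wedge : (kermx (d1mx c z) :&: kermx wedge_mx == z)%MS.
Proof.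
have zw0 : z *m wedge_mx = 0.
  apply/rowP => q; rewrite -[q]enum_valK -wedge_coordE wedge_coord_wedge.
  by rewrite mxE mulrC subrr.
apply/andP; split.
  apply: submx_trans (capmxSr _ _) _; apply/row_subP => i.
  by apply: wedge_mx_eq0; apply/sub_kermxP; exact: row_sub.
by rewrite sub_capmx !sub_kermx -mul_wedge_nabla_eq0 zw0 mul0mx !eqxx.
Qed.

Lemma H1dim_nabla : H1dim c z = \rank (kermx N).
Proof.
have := mxrank_mul_ker (kermx (d1mx c z)) wedge_mx.
rewrite -(eqmx_rank kermx_nabla) (eqmx_rank cap_kermx_wedge) rank_rV z_neq0.
by rewrite /H1dim /d0mx rank_rV z_neq0 => <-; rewrite addnK.
Qed.

End KoszulComplex.

Theorem lemma4p2 (n m : nat) (c : cupdata n m) (k : nat) (z : 'rV[CC]_n) :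
  z != 0 -> (Wk c k z <-> Rk c k z).
Proof.
move=> z_neq0; rewrite /Wk zero_locus_fitting /Rk H1dim_nabla // mxrank_ker.
have := rank_leq_row (eval_mx (nabla c) z); lia.
Qed.
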